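(* Let $\mathcal{H}$ be an $n$-dimensional (real or complex) Hilbert space, let $(F,G)$ be an $(N,n)$ dual pair in $\mathcal{H}$, let $U$ be a unitary operator on $\mathcal{H}$, and let $\{q_i\}_{i=1}^N$ be the weight number sequence associated with a probability sequence $\{p_i\}_{i=1}^N$. Then $(F,G)\in\zeta_P^{(1)}$ if and only if $(UF,UG)\in\zeta_P^{(1)}$, where $UF=\{Uf_i\}_{i=1}^N$, $UG=\{Ug_i\}_{i=1}^N$.
   Context: A finite sequence $F=\{f_i\}_{i=1}^N$ in $\mathcal{H}$ is a frame if there are $A,B>0$ with $A\|f\|^2\le\sum_{i=1}^N|\langle f,f_i\rangle|^2\le B\|f\|^2$ for all $f$. A frame $G=\{g_i\}_{i=1}^N$ is a dual of $F$ if $f=\sum_i\langle f,f_i\rangle g_i=\sum_i\langle f,g_i\rangle f_i$ for all $f$; then $(F,G)$ is an $(N,n)$ dual pair. A probability sequence is $\{p_i\}_{i=1}^N$ with $0\le p_i\le1$, $\sum p_i=1$; weight numbers $q_i=\frac{\sum_{j} p_j}{\sum_{j} p_j-p_i}\cdot\frac{N-1}{n}$. For $\Lambda\subseteq\{1,\dots,N\}$ the error operator is $E_{\Lambda,(F,G)}f=\sum_{i\in\Lambda}q_i\langle f,f_i\rangle g_i$, and $\mathcal{A}_P^{(1)}(F,G)=\max_{|\Lambda|=1}\frac{\|E_{\Lambda,(F,G)}\|+\rho(E_{\Lambda,(F,G)})}{2}$ (operator norm and spectral radius). Let $\mathcal{A}_P^{(1)}=\inf\{\mathcal{A}_P^{(1)}(F,G):(F,G)\text{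 an }(N,n)\text{ dual pair in }\mathcal{H}\}$. A dual pair is a 1-erasure PASOD-pair if $\mathcal{A}_P^{(1)}(F,G)=\mathcal{A}_P^{(1)}$; $\zeta_P^{(1)}$ is the set of such pairs. *)

From HB Require Import structures.
From mathcomp Require Import all_boot all_order all_algebra.
From mathcomp Require Import classical_sets boolp reals.
From mathcomp Require Import complex.
Set Implicit Arguments. Unset Strict Implicit. Unset Printing Implicit Defensive.
Import Order.TTheory GRing.Theory Num.Theory.
Local Open Scope ring_scope.
Local Open Scope classical_set_scope.

Section FrameDefs.
Variables (R : realType) (n N : nat).
(* [isreal = true]  : H is the real Hilbert space R^n, realised inside C^n as
                      the vectors with real coordinates;
   [isreal = false] : H is the complex Hilbert space C^n. *)
Variable isreal : bool.

Definition vec := 'cV[R[i]]_n.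

Definition inH (v : vec) : Prop := isreal -> forall j, complex.Im (v j 0) = 0.

Definition dotp (u v : vec) : R[i] := \sum_(j < n) u j 0 * conjc (v j 0).

Definition vnorm (v : vec) : R := Num.sqrt (\sum_(j < n) ComplexField.Normc.normc (v j 0) ^+ 2).

Definition adj {m k} (A : 'M[R[i]]_(m, k)) : 'M[R[i]]_(k, m) := map_mx conjc A^T.

Definition opnorm (A : 'M[R[i]]_n) : R :=
  sup [set vnorm (A *m x) | x in [set x : vec | inH x /\ vnorm x = 1]].

Definition specrad (A : 'M[R[i]]_n) : R :=
  sup [set ComplexField.Normc.normc l | l in [set l : R[i] | eigenvalue A l]].

Definition is_frame (F : 'I_N -> vec) : Prop :=
  (forall i, inH (F i)) /\
  exists A B : R, 0 < A /\ 0 < B /\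
    forall f : vec, inH f ->
      A * vnorm f ^+ 2 <= \sum_(i < N) ComplexField.Normc.normc (dotp f (F i)) ^+ 2 /\
      \sum_(i < N) ComplexField.Normc.normc (dotp f (F i)) ^+ 2 <= B * vnorm f ^+ 2.

Definition is_dual (F G : 'I_N -> vec) : Prop :=
  is_frame G /\
  forall f : vec, inH f ->
    f = \sum_(i < N) dotp f (F i) *: G i /\ f = \sum_(i < N) dotp f (G i) *: F i.

Definition dual_pair (F G : 'I_N -> vec) : Prop := is_frame F /\ is_dual F G.

Definition probability_seq (p : 'I_N -> R) : Prop :=
  (forall i, 0 <= p i <= 1) /\ \sum_(i < N) p i = 1.

Definition weight (p : 'I_N -> R) (i : 'I_N) : R :=
  (\sum_(j < N) p j) / (\sum_(j < N) p j - p i) * ((N%:R - 1) / n%:R).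

(* error operator E_{Lambda,(F,G)} f = sum_{i in Lambda} q_i <f,f_i> g_i *)
Definition err_op (p : 'I_N -> R) (L : {set 'I_N}) (F G : 'I_N -> vec)
  : 'M[R[i]]_n :=
  \sum_(i in L) (real_complex _ (weight p i)) *: (G i *m adj (F i)).

Definition AP1 (p : 'I_N -> R) (F G : 'I_N -> vec) : R :=
  sup [set (opnorm (err_op p L F G) + specrad (err_op p L F G)) / 2
      | L in [set L : {set 'I_N} | #|L| = 1%N]].

Definition AP1_opt (p : 'I_N -> R) : R :=
  inf [set AP1 p FG.1 FG.2 | FG in [set FG : ('I_N -> vec) * ('I_N -> vec)
                                    | dual_pair FG.1 FG.2]].

Definition zetaP1 (p : 'I_N -> R) (F G : 'I_N -> vec) : Prop :=
  dual_pair F G /\ AP1 p F G = AP1_opt p.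

Definition unitary_on (U : 'M[R[i]]_n) : Prop :=
  (isreal -> forall j k, complex.Im (U j k) = 0) /\
  adj U *m U = 1%:M /\ U *m adj U = 1%:M.

End FrameDefs.

From HB Require Import structures.
From mathcomp Require Import all_boot all_order all_algebra.
From mathcomp Require Import classical_sets boolp reals.
From mathcomp Require Import complex.
Set Implicit Arguments. Unset Strict Implicit. Unset Printing Implicit Defensive.
Import Order.TTheory GRing.Theory Num.Theory.
Local Open Scope ring_scope.
Local Open Scope classical_set_scope.

(* A unitary U maps the unit sphere of H onto itself and satisfies
   <U x, U y> = <x, y>, so conjugation A |-> U A U^* preserves both the operator
   norm and the spectrum.  The error operators of (UF, UG) are the U-conjugates of
   those of (F, G), hence A_P^(1)(UF, UG) = A_P^(1)(F, G); and U transports the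
   frame and duality identities, so (UF, UG) is again a dual pair.  Since the
   optimal value A_P^(1) does not depend on the pair, PASOD-ness is preserved. *)

Local Notation normc := ComplexField.Normc.normc.

Section Adjoint.
Variable R : realType.

Lemma adjK m k (A : 'M[R[i]]_(m, k)) : adj (adj A) = A.
Proof. by apply/matrixP => a b; rewrite !mxE conjcK. Qed.

Lemma adjM m k l (A : 'M[R[i]]_(m, k)) (B : 'M[R[i]]_(k, l)) :
  adj (A *m B) = adj B *m adj A.
Proof.
apply/matrixP => a b; rewrite !mxE rmorph_sum; apply: eq_bigr => j _.
by rewrite !mxE rmorphM mulrC.
Qed.

Lemma dotp_adj n (u v : vec R n) : dotp u v = (adj v *m u) 0 0.
Proof. by rewrite /dotp !mxE; apply: eq_bigr => j _; rewrite !mxE mulrC. Qed.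

Lemma dotp_mulmxl n (A : 'M[R[i]]_n) (u v : vec R n) :
  dotp (A *m u) v = dotp u (adj A *m v).
Proof. by rewrite !dotp_adj adjM adjK mulmxA. Qed.

Lemma dotp_mulmxr n (A : 'M[R[i]]_n) (u v : vec R n) :
  dotp u (A *m v) = dotp (adj A *m u) v.
Proof. by rewrite dotp_mulmxl adjK. Qed.

Lemma normc_sqr (z : R[i]) : ((normc z ^+ 2)%:C = z * z^*)%C.
Proof.
case: z => a b /=; rewrite sqr_sqrtr ?addr_ge0 ?sqr_ge0 //.
apply/eqP; rewrite eq_complex /=; apply/andP; split; apply/eqP.
  by rewrite !expr2 mulrN opprK.
by rewrite mulrN mulrC addNr.
Qed.

Lemma vnorm_isometry n (A : 'M[R[i]]_n) (v : vec R n) :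
  adj A *m A = 1%:M -> vnorm (A *m v) = vnorm v.
Proof.
have sqr_dotp (w : vec R n) :
    ((\sum_(j < n) normc (w j 0) ^+ 2)%:C = dotp w w)%C.
  by rewrite rmorph_sum; apply: eq_bigr => j _; exact: normc_sqr.
move=> AA; rewrite /vnorm; congr (Num.sqrt _); apply: complexI.
by rewrite !sqr_dotp dotp_mulmxl mulmxA AA mul1mx.
Qed.

Lemma complex_realE (x : R[i]) : (x \is Num.real) = (complex.Im x == 0).
Proof. by case: x; exact: complex_real. Qed.

Lemma mxOver_realE m k (A : 'M[R[i]]_(m, k)) :
  A \is a mxOver Num.real <-> forall i j, complex.Im (A i j) = 0.
Proof.
by split => [/mxOverP AR i j|AR]; [apply/eqP; rewrite -complex_realE|
  apply/mxOverP => i j; rewrite complex_realE AR].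
Qed.

Lemma adj_mxOver_real m k (A : 'M[R[i]]_(m, k)) :
  A \is a mxOver Num.real -> adj A \is a mxOver Num.real.
Proof.
move=> /mxOverP AR; apply/mxOverP => i j; rewrite !mxE.
by have /complex_realP[a ->] := AR j i; rewrite conjc_real complex_realE.
Qed.

End Adjoint.

Lemma eigenvalue_similar (F : fieldType) n (V A : 'M[F]_n) :
  V \in unitmx -> eigenvalue (V *m A *m invmx V) =1 eigenvalue A.
Proof.
have conj_sub (W B : 'M[F]_n) :
    W \in unitmx -> {subset eigenvalue (W *m B *m invmx W) <= eigenvalue B}.
  move=> Wu; rewrite -(pinvmxE Wu); apply: eigenvalue_conjmx.
    by rewrite submx_full // row_full_unit.
  by rewrite row_free_unit.
move=> Vu a; apply/idP/idP; first exact: conj_sub.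
have AE : invmx V *m (V *m A *m invmx V) *m invmx (invmx V) = A.
  by rewrite invmxK !mulmxA mulVmx // mul1mx -mulmxA mulVmx // mulmx1.
by rewrite -{1}AE; apply: conj_sub; rewrite unitmx_inv.
Qed.

Lemma specrad_similar (R : realType) n (V A : 'M[R[i]]_n) :
  V \in unitmx -> specrad (V *m A *m invmx V) = specrad A.
Proof.
move=> Vu; apply: (congr1 (fun S => sup [set normc l | l in S])).
by apply/funext => a /=; rewrite eigenvalue_similar.
Qed.

Lemma err_op_mulmx (R : realType) n N (p : 'I_N -> R) (L : {set 'I_N})
    (F G : 'I_N -> vec R n) (U : 'M[R[i]]_n) :
  err_op p L (fun i => U *m F i) (fun i => U *m G i) = U *m err_op p L F G *m adj U.
Proof.
rewrite /err_op mulmx_sumr mulmx_suml; apply: eq_bigr => i _.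
by rewrite adjM -scalemxAr -scalemxAl !mulmxA.
Qed.

Section Unitary.
Variables (R : realType) (n : nat) (isreal : bool).
Implicit Types (U A : 'M[R[i]]_n) (v : vec R n).

Lemma inHE v : inH isreal v <-> (isreal -> v \is a mxOver Num.real).
Proof.
by split=> vR /vR; rewrite mxOver_realE => vR' j *; rewrite ?ord1 vR'.
Qed.

Lemma unitary_realE U :
  unitary_on isreal U -> isreal -> U \is a mxOver Num.real.
Proof. by case=> UR _ /UR; rewrite mxOver_realE. Qed.

Lemma unitary_adj U : unitary_on isreal U -> unitary_on isreal (adj U).
Proof.
move=> Uu; have [_ [adjUU UadjU]] := Uu.
split; last by rewrite adjK; split.
by move=> /(unitary_realE Uu) /adj_mxOver_real; rewrite mxOver_realE.
Qed.

Lemma inH_unitary U v : unitary_on isreal U -> inH isreal v -> inH isreal (U *m v).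
Proof.
move=> Uu /inHE vR; apply/inHE => r.
by apply: mxOverM; [exact: unitary_realE | exact: vR].
Qed.

Lemma vnorm_unitary U v : unitary_on isreal U -> vnorm (U *m v) = vnorm v.
Proof. by case=> _ [adjUU _]; exact: vnorm_isometry. Qed.

Lemma invmx_unitary U : unitary_on isreal U -> U \in unitmx /\ invmx U = adj U.
Proof.
case=> _ [adjUU UadjU]; have [Uunit _] := mulmx1_unit UadjU.
by split=> //; rewrite -[LHS]mul1mx -adjUU -mulmxA mulmxV // mulmx1.
Qed.

Let unit_sphere := [set x : vec R n | inH isreal x /\ vnorm x = 1].

Lemma unit_sphere_unitary U :
  unitary_on isreal U -> [set U *m x | x in unit_sphere] = unit_sphere.
Proof.
move=> Uu; have Uu' := unitary_adj Uu; have [_ [_ UadjU]] := Uu.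
apply/seteqP; split => [_ [x [xH x1] <-]|y [yH y1]].
  by split; [exact: inH_unitary | rewrite vnorm_unitary].
exists (adj U *m y); last by rewrite mulmxA UadjU mul1mx.
by split; [exact: inH_unitary | rewrite vnorm_unitary].
Qed.

Lemma opnorm_unitary_conj U A :
  unitary_on isreal U -> opnorm isreal (U *m A *m adj U) = opnorm isreal A.
Proof.
move=> Uu; rewrite /opnorm -/unit_sphere.
rewrite -[in RHS](unit_sphere_unitary (unitary_adj Uu)) image_comp.
by apply: congr1; apply: eq_imagel => x _ /=; rewrite -!mulmxA vnorm_unitary.
Qed.

Variables (N : nat) (U : 'M[R[i]]_n).
Hypothesis Uu : unitary_on isreal U.

Lemma AP1_unitary (p : 'I_N -> R) (F G : 'I_N -> vec R n) :
  AP1 isreal p (fun i => U *m F i) (fun i => U *m G i) = AP1 isreal p F G.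
Proof.
have [Uunit invU] := invmx_unitary Uu.
refine (congr1 _ (eq_imagel _)) => L _.
by rewrite err_op_mulmx (opnorm_unitary_conj _ Uu) -invU (specrad_similar _ Uunit).
Qed.

Lemma is_frame_unitary (F : 'I_N -> vec R n) :
  is_frame isreal F -> is_frame isreal (fun i => U *m F i).
Proof.
have Uu' := unitary_adj Uu; move=> [FH [A [B [A0 [B0 FAB]]]]].
split=> [i|]; first exact: inH_unitary.
exists A, B; do 2!split=> //; move=> f fH.
under eq_bigr => i _ do rewrite dotp_mulmxr.
by rewrite -(vnorm_unitary f Uu'); apply: FAB; exact: inH_unitary.
Qed.

Lemma is_dual_unitary (F G : 'I_N -> vec R n) :
  is_dual isreal F G -> is_dual isreal (fun i => U *m F i) (fun i => U *m G i).
Proof.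
move=> [GF FGid]; have [_ [_ UadjU]] := Uu.
split=> [|f fH]; first exact: is_frame_unitary.
have [idFG idGF] := FGid _ (inH_unitary (unitary_adj Uu) fH).
have transport (X Y : 'I_N -> vec R n) :
    \sum_(i < N) dotp f (U *m X i) *: (U *m Y i) =
    U *m \sum_(i < N) dotp (adj U *m f) (X i) *: Y i.
  by rewrite mulmx_sumr; apply: eq_bigr => i _; rewrite dotp_mulmxr scalemxAr.
by rewrite !transport -idFG -idGF mulmxA UadjU mul1mx.
Qed.

Lemma dual_pair_unitary (F G : 'I_N -> vec R n) :
  dual_pair isreal F G -> dual_pair isreal (fun i => U *m F i) (fun i => U *m G i).
Proof. by move=> [Ff FG]; split; [exact: is_frame_unitary | exact: is_dual_unitary]. Qed.

End Unitary.

Theorem proposition4p2 (R : realType) (n N : nat) (isreal : bool)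
  (p : 'I_N -> R) (F G : 'I_N -> vec R n) (U : 'M[R[i]]_n) :
  probability_seq p ->
  dual_pair isreal F G ->
  unitary_on isreal U ->
  (zetaP1 isreal p F G <->
   zetaP1 isreal p (fun i => U *m F i) (fun i => U *m G i)).
Proof.
move=> _ FG Uu; rewrite /zetaP1 AP1_unitary //.
by split=> -[_ ->]; split=> //; exact: dual_pair_unitary.
Qed.
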